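(* The homotopy $H:\mathcal{T}^c(M)\to\mathcal{T}^c(M)$ maps the sub-$\mathbb{S}$-module $\mathcal{G}^{¡}\subset\mathcal{T}^c(M)$ into itself.
   Context: $M$ is spanned by arity-2 elements $\mu$ (degree 1) and $\beta$ (degree 2), trivial $\mathbb{S}_2$-action. The Gerstenhaber operad is $\mathcal{G}=\mathcal{T}(s^{-1}M)/(R)$ with $s^{-1}\mu=\bullet$ (commutative associative product) and $s^{-1}\beta=\langle\,,\rangle$ (degree-1 Lie bracket), with Leibniz compatibility. Its Koszul dual cooperad $\mathcal{G}^{¡}$ is the intersection of $\mathcal{T}^c(M)\subset\mathcal{T}^c(s\overline{\mathcal{G}})$ with the kernel of the coderivation $d_2$ of the bar construction induced by infinitesimal composition in $\mathcal G$. $H$ is defined as follows: for a binary tree and vertex $v$, $\omega(v)=m_vn_v$ where $m_v,n_v$ are the numbers of leaves above the two inputs of $v$; $h:M\to M$ sends $\beta\mapsto\mu,\mu\mapsto0$; $H$ sends a decorated tree with $n$ vertices to $\sum_v\frac{\omega(v)}{\binom{n+1}{2}}$ times the tree with $h$ applied at $v$ (Koszul sign, vertices ordered via the planar representation). *)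

From HB Require Import structures.
From mathcomp Require Import all_boot all_order all_algebra.
Set Implicit Arguments. Unset Strict Implicit. Unset Printing Implicit Defensive.
Import GRing.Theory.
Local Open Scope ring_scope.

(* Generators of M: mu (degree 1) and beta (degree 2), arity 2, trivial S_2-action. *)
Inductive dec := Mu | Be.

Definition dec_eqb (a b : dec) : bool :=
  match a, b with Mu, Mu | Be, Be => true | _, _ => false end.
Lemma dec_eqP : Equality.axiom dec_eqb.
Proof. by case; case; constructor. Qed.
HB.instance Definition _ := hasDecEq.Build dec dec_eqP.

Definition deg (d : dec) : nat := if d is Mu then 1%N else 2%N.

Inductive tree := Lf of nat | Nd of dec & tree & tree.

Fixpoint leaves (t : tree) : seq nat :=
  match t with Lf i => [:: i] | Nd _ l r => leaves l ++ leaves r end.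
Definition nleaves (t : tree) : nat := size (leaves t).

Fixpoint tdeg (t : tree) : nat :=
  match t with Lf _ => 0%N | Nd d l r => (deg d + tdeg l + tdeg r)%N end.
Definition tpar (t : tree) : bool := odd (tdeg t).

(* tiso t t' s : t' is another planar representative of the same non-planar
   tree, and [t'] = (-1)^s [t] in T^c(M) (Koszul sign of reordering the vertex
   decorations, vertices being ordered by the prefix order of the planar
   representative; the S_2-action on M is trivial). *)
Inductive tiso : tree -> tree -> bool -> Prop :=
| tiso_leaf i : tiso (Lf i) (Lf i) false
| tiso_node d l r l' r' s1 s2 :
    tiso l l' s1 -> tiso r r' s2 -> tiso (Nd d l r) (Nd d l' r') (s1 (+) s2)
| tiso_swap d l r l' r' s1 s2 :
    tiso l l' s1 -> tiso r r' s2 ->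
    tiso (Nd d l r) (Nd d r' l') (s1 (+) s2 (+) (tpar l && tpar r)).

Section Model.
Variable R : fieldType.

(* An element of T^c(M)(n) is given by its coefficient function c on planar
   representatives: x = sum over non-planar trees of c(t) [t]. *)
Definition tcM (n : nat) (c : tree -> R) : Prop :=
  (forall t, c t != 0 -> perm_eq (leaves t) (iota 0 n)) /\
  (forall t t' s, tiso t t' s -> c t' = (-1) ^+ s * c t).

(* One-hole contexts: a tree with one ternary vertex (the hole) whose three
   input subtrees A, B, C are given separately. *)
Inductive ctx := Hole | CL of dec & ctx & tree | CR of dec & tree & ctx.
Fixpoint plug (K : ctx) (u : tree) : tree :=
  match K with
  | Hole => u
  | CL d K' r => Nd d (plug K' u) r
  | CR d l K' => Nd d l (plug K' u)
  end.

(* The twelve expansions of the ternary vertex into two binary vertices, outer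
   decoration o, inner decoration i, and the input k (0 = A, 1 = B, 2 = C) that
   is attached directly to the outer vertex.  loc_sign is the Koszul sign
   relating the planar tree to the composite  E(k,o,i) o (A,B,C)  with E(k,o,i)
   the 2-vertex tree o(i(x_a,x_b),x_k). *)
Definition loc_tree (k : 'I_3) (o i : dec) (A B C : tree) : tree :=
  match val k with
  | 0 => Nd o (Nd i B C) A
  | 1 => Nd o (Nd i A C) B
  | _ => Nd o (Nd i A B) C
  end.
Definition loc_sign (k : 'I_3) (A B C : tree) : bool :=
  match val k with
  | 0 => tpar A && (tpar B (+) tpar C)
  | 1 => tpar B && tpar C
  | _ => false
  end.

(* T^c(M)(3) has basis E(k,o,i), k in 'I_3, o i in {Mu,Be}. *)
Definition locvec := 'I_3 -> dec -> dec -> R.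
Definition Eb (k0 : 'I_3) (o0 i0 : dec) : locvec :=
  fun k o i => ((k == k0) && (o == o0) && (i == i0))%:R.
Definition vadd (u v : locvec) : locvec := fun k o i => u k o i + v k o i.
Definition vsub (u v : locvec) : locvec := fun k o i => u k o i - v k o i.

Definition i0 : 'I_3 := @Ordinal 3 0 isT.
Definition i1 : 'I_3 := @Ordinal 3 1 isT.
Definition i2 : 'I_3 := @Ordinal 3 2 isT.

(* ker of d_2 : T^c(M)(3) -> sG(3): the S_3-module s^2 R(3) (with the
   suspension signs), spanned by the associativity relations of the product,
   the Jacobi relation of the degree-1 bracket, and the Leibniz relations. *)
Definition relvecs : seq locvec :=
  [:: vsub (Eb i0 Mu Mu) (Eb i1 Mu Mu);
      vsub (Eb i0 Mu Mu) (Eb i2 Mu Mu);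
      vsub (Eb i1 Mu Mu) (Eb i2 Mu Mu);
      vadd (vadd (Eb i0 Be Be) (Eb i1 Be Be)) (Eb i2 Be Be);
      vadd (vadd (Eb i0 Be Mu) (Eb i1 Mu Be)) (Eb i2 Mu Be);
      vadd (vadd (Eb i1 Be Mu) (Eb i0 Mu Be)) (Eb i2 Mu Be);
      vadd (vadd (Eb i2 Be Mu) (Eb i0 Mu Be)) (Eb i1 Mu Be)].

Definition in_relspan (a : locvec) : Prop :=
  exists lam : 'I_7 -> R,
    forall k o i, a k o i = \sum_(r < 7) lam r * nth (fun _ _ _ => 0) relvecs r k o i.

(* G^¡(n) = T^c(M)(n) ∩ ker d_2 : for every edge contraction (context K with
   inputs A,B,C), the local component must lie in ker of d_2 on T^c(M)(3). *)
Definition Gdual (n : nat) (c : tree -> R) : Prop :=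
  tcM n c /\
  forall K A B C,
    in_relspan (fun k o i => (-1) ^+ loc_sign k A B C * c (plug K (loc_tree k o i A B C))).

(* The homotopy H, on coefficient functions: the coefficient of t in H(x) is the
   sum over vertices v of t decorated by Mu of
   omega(v) / binom(n+1,2) * (Koszul sign) * (coefficient of t with Be at v).
   f rebuilds the whole tree, s is the parity of the degrees of the vertices
   preceding the current one in prefix order. *)
Fixpoint Hsum (c : tree -> R) (f : tree -> tree) (s : bool) (t : tree) : R :=
  match t with
  | Lf _ => 0
  | Nd d l r =>
      (if d is Mu then (-1) ^+ s * (nleaves l * nleaves r)%:R * c (f (Nd Be l r))
       else 0)
      + Hsum c (fun l' => f (Nd d l' r)) (s (+) odd (deg d)) l
      + Hsum c (fun r' => f (Nd d l r')) (s (+) odd (deg d) (+) tpar l) r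
  end.

Definition Hop (c : tree -> R) : tree -> R :=
  fun t => ('C(nleaves t, 2))%:R^-1 * Hsum c id false t.

End Model.

From HB Require Import structures.
From mathcomp Require Import all_boot all_order all_algebra.
From mathcomp Require Import ring zify.
Set Implicit Arguments. Unset Strict Implicit. Unset Printing Implicit Defensive.
Import GRing.Theory.
Local Open Scope ring_scope.

(* Membership in G^¡ is a local condition: for every pair of adjacent vertices
   of every tree, the components of x on the twelve trees obtained by
   re-expanding that pair (with fixed surrounding context and fixed input
   subtrees A, B, C) must form an element of the relation space
   ker d_2 ⊂ T^c(M)(3), which is cut out by six linear equations.  The
   corresponding component of H(x) splits into the terms of H at vertices of
   the context or of A, B, C, which are local components of x for the same
   pair in other trees, and the terms at the two vertices of the pair.  The
   latter apply h locally with the weights ω = m n, and with these weights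
   the local operator maps the relation space into itself: the weight
   (n_B + n_C) n_A of the outer vertex of one expansion is the total weight
   n_A n_C + n_A n_B of the inner vertices of the two other ones.  Support and
   compatibility with the choice of planar representatives are preserved
   vertex by vertex. *)

Lemma ord3P (k : 'I_3) : [\/ k = i0, k = i1 | k = i2].
Proof.
case: k => [[|[|[|m]]] Hk] //.
- by constructor 1; apply: val_inj.
- by constructor 2; apply: val_inj.
- by constructor 3; apply: val_inj.
Qed.

Fixpoint ctdeg (K : ctx) : nat :=
  match K with
  | Hole => 0%N
  | CL d K' r => (deg d + ctdeg K' + tdeg r)%N
  | CR d l K' => (deg d + tdeg l + ctdeg K')%N
  end.

Lemma tdeg_plug K u : tdeg (plug K u) = (ctdeg K + tdeg u)%N.
Proof. by elim: K => [|d K IH r|d l K IH] //=; rewrite IH; lia. Qed.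

Lemma tpar_succ t t' : tdeg t' = (tdeg t).+1 -> tpar t' = ~~ tpar t.
Proof. by rewrite /tpar => ->; rewrite oddS. Qed.

Definition locpar (o i : dec) : bool := odd (deg o) (+) odd (deg i).

Lemma tpar_plug_loc_tree K k o i A B C :
  tpar (plug K (loc_tree k o i A B C)) =
  odd (ctdeg K) (+) tpar A (+) tpar B (+) tpar C (+) locpar o i.
Proof.
rewrite /tpar tdeg_plug /locpar.
case: (ord3P k) => ->; rewrite /= !oddD;
by case: (odd (ctdeg K)); case: (odd (deg o)); case: (odd (deg i));
   case: (odd (tdeg A)); case: (odd (tdeg B)); case: (odd (tdeg C)).
Qed.

Lemma nleaves_plug K u u' :
  nleaves u = nleaves u' -> nleaves (plug K u) = nleaves (plug K u').
Proof.
move=> E; elim: K => [|d K IH r|d l K IH] //=; rewrite /nleaves /= !size_cat;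
by rewrite -!/(nleaves _) IH.
Qed.

Lemma nleaves_loc_tree k o i A B C :
  nleaves (loc_tree k o i A B C) = (nleaves A + nleaves B + nleaves C)%N.
Proof. by case: (ord3P k) => ->; rewrite /nleaves /= !size_cat; lia. Qed.

Lemma nleaves_plug_loc_tree K k o i A B C :
  nleaves (plug K (loc_tree k o i A B C)) = nleaves (plug K (loc_tree i0 Mu Mu A B C)).
Proof. by apply: nleaves_plug; rewrite !nleaves_loc_tree. Qed.

Lemma tiso_tdeg t t' s : tiso t t' s -> tdeg t' = tdeg t.
Proof. by elim=> //= *; lia. Qed.

Lemma tiso_nleaves t t' s : tiso t t' s -> nleaves t' = nleaves t.
Proof.
elim=> //= d l r l' r' s1 s2 _ E1 _ E2.
all: by rewrite /nleaves /= !size_cat -!/(nleaves _) E1 E2 // addnC.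
Qed.

(* Parity of the vertices of [loc_tree k o i A B C] other than o and i that
   precede the subtree A (resp. B, C) in prefix order. *)
Definition prepar_A (k : 'I_3) (A B C : tree) : bool :=
  match val k with 0 => tpar B (+) tpar C | _ => false end.
Definition prepar_B (k : 'I_3) (A B C : tree) : bool :=
  match val k with 0 => false | 1 => tpar A (+) tpar C | _ => tpar A end.
Definition prepar_C (k : 'I_3) (A B C : tree) : bool :=
  match val k with 0 => tpar B | 1 => tpar A | _ => tpar A (+) tpar B end.

Lemma loc_sign_flipA A A' B C k : tpar A' = ~~ tpar A ->
  loc_sign k A B C (+) prepar_A k A B C = loc_sign k A' B C (+) false.
Proof.
move=> H; case: (ord3P k) => ->; rewrite /loc_sign /prepar_A /= ?H;
by case: (tpar A); case: (tpar B); case: (tpar C).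
Qed.

Lemma loc_sign_flipB A B B' C k : tpar B' = ~~ tpar B ->
  loc_sign k A B C (+) prepar_B k A B C = loc_sign k A B' C (+) tpar A.
Proof.
move=> H; case: (ord3P k) => ->; rewrite /loc_sign /prepar_B /= ?H;
by case: (tpar A); case: (tpar B); case: (tpar C).
Qed.

Lemma loc_sign_flipC A B C C' k : tpar C' = ~~ tpar C ->
  loc_sign k A B C (+) prepar_C k A B C = loc_sign k A B C' (+) (tpar A (+) tpar B).
Proof.
move=> H; case: (ord3P k) => ->; rewrite /loc_sign /prepar_C /= ?H;
by case: (tpar A); case: (tpar B); case: (tpar C).
Qed.

(* The weights ω of the outer and of the inner vertex of [loc_tree k o i A B C],
   A, B and C having nA, nB and nC leaves. *)
Definition omega_out (k : 'I_3) (nA nB nC : nat) : nat :=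
  match val k with
  | 0 => ((nB + nC) * nA)%N | 1 => ((nA + nC) * nB)%N | _ => ((nA + nB) * nC)%N
  end.
Definition omega_in (k : 'I_3) (nA nB nC : nat) : nat :=
  match val k with 0 => (nB * nC)%N | 1 => (nA * nC)%N | _ => (nA * nB)%N end.

Section RelationEquations.
Variable R : comPzRingType.
Implicit Types a b : 'I_3 -> dec -> dec -> R.

Definition rel_eqs a : Prop :=
  (a i0 Mu Mu + a i1 Mu Mu + a i2 Mu Mu = 0 /\ a i0 Be Be = a i1 Be Be) /\
  (a i1 Be Be = a i2 Be Be /\ a i0 Mu Be = a i1 Be Mu + a i2 Be Mu) /\
  (a i1 Mu Be = a i0 Be Mu + a i2 Be Mu /\ a i2 Mu Be = a i0 Be Mu + a i1 Be Mu).

Lemma rel_eqs_ext a b : (forall k o i, a k o i = b k o i) -> rel_eqs a -> rel_eqs b.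
Proof. by move=> E; rewrite /rel_eqs !E. Qed.

Lemma rel_eqs0 : rel_eqs (fun _ _ _ => 0).
Proof. by rewrite /rel_eqs; repeat split; ring. Qed.

Lemma rel_eqsD a b : rel_eqs a -> rel_eqs b -> rel_eqs (fun k o i => a k o i + b k o i).
Proof.
case=> [[h1 h2] [[h3 h4] [h5 h6]]] [[g1 g2] [[g3 g4] [g5 g6]]].
rewrite /rel_eqs h2 h3 h4 h5 h6 g2 g3 g4 g5 g6; repeat split; try ring.
by rewrite -[RHS](addr0 0) -{1}h1 -g1; ring.
Qed.

Lemma rel_eqsZ (l : R) a : rel_eqs a -> rel_eqs (fun k o i => l * a k o i).
Proof.
case=> [[h1 h2] [[h3 h4] [h5 h6]]].
rewrite /rel_eqs h2 h3 h4 h5 h6; repeat split; try ring.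
by rewrite -!mulrDr h1 mulr0.
Qed.

Lemma rel_eqs_locpar a : rel_eqs a -> rel_eqs (fun k o i => (-1) ^+ locpar o i * a k o i).
Proof.
case=> [[h1 h2] [[h3 h4] [h5 h6]]].
rewrite /rel_eqs /locpar /= h2 h3 h4 h5 h6; repeat split; try ring.
by rewrite !mul1r h1.
Qed.

Lemma rel_eqs_local_homotopy a nA nB nC (s : bool) : rel_eqs a ->
  rel_eqs (fun k o i => (-1) ^+ s *
    ((if o is Mu then (omega_out k nA nB nC)%:R * a k Be i else 0) +
     (if i is Mu then (-1) ^+ odd (deg o) * (omega_in k nA nB nC)%:R * a k o Be
      else 0))).
Proof.
case=> [[h1 h2] [[h3 h4] [h5 h6]]].
rewrite /rel_eqs /omega_out /omega_in /= !natrM !natrD h4 h5 h6 -h3 -h2.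
by repeat split; ring.
Qed.

Lemma signr_regroup (l s g sg l' X : bool) (x : R) : l (+) sg = l' (+) X ->
  (-1) ^+ (l (+) s (+) g (+) sg) * x = (-1) ^+ (s (+) X) * ((-1) ^+ g * ((-1) ^+ l' * x)).
Proof.
have -> : l (+) s (+) g (+) sg = (l (+) sg) (+) s (+) g by case: l s g sg; do 3 case.
by move=> ->; rewrite !signr_addb; ring.
Qed.

End RelationEquations.

Section Homotopy.
Variable R : fieldType.
Implicit Types a : 'I_3 -> dec -> dec -> R.

Lemma in_relspanP a : in_relspan a <-> rel_eqs a.
Proof.
split.
- case=> lam H; rewrite /rel_eqs !H /relvecs.
  rewrite !big_ord_recl !big_ord0 /= /vsub /vadd /Eb /=.
  by repeat split; ring.
- case=> [[h1 h2] [[h3 h4] [h5 h6]]].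
  exists (fun r : 'I_7 => nth 0 [:: - a i1 Mu Mu; - a i2 Mu Mu; 0; a i0 Be Be;
      a i0 Be Mu; a i1 Be Mu; a i2 Be Mu] r).
  move=> k o i; rewrite /relvecs !big_ord_recl !big_ord0 /= /vsub /vadd /Eb /=.
  case: (ord3P k) => ->; case: o; case: i => /=.
  all: try ring.
  all: rewrite ?h2 ?h3 ?h4 ?h5 ?h6; try ring.
  all: rewrite -?h1 /=; ring.
Qed.

Variable c : tree -> R.

Lemma Hsum_signE t f s : Hsum c f s t = (-1) ^+ s * Hsum c f false t.
Proof.
elim: t f s => [i|d l IHl r IHr] f s; first by rewrite /= mulr0.
rewrite /= IHl [Hsum _ _ (odd _) l]IHl IHr [Hsum _ _ (_ (+) tpar l) r]IHr.
by rewrite !signr_addb; case: d => /=; ring.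
Qed.

Lemma rel_eqs_Hsum t (F : 'I_3 -> dec -> dec -> tree -> tree)
    (e : 'I_3 -> dec -> dec -> R) s :
  (forall t', tdeg t' = (tdeg t).+1 -> rel_eqs (fun k o i => e k o i * c (F k o i t'))) ->
  rel_eqs (fun k o i => e k o i * Hsum c (F k o i) s t).
Proof.
elim: t F s => [j|d l IHl r IHr] F s H /=.
  by apply: rel_eqs_ext (rel_eqs0 R) => k o i; rewrite mulr0.
apply: rel_eqs_ext (rel_eqsD (rel_eqsD _ (IHl (fun k o i l' => F k o i (Nd d l' r)) _ _))
                        (IHr (fun k o i r' => F k o i (Nd d l r')) _ _)).
- by move=> k o i /=; rewrite !mulrDr.
- case: d H => H; last by apply: rel_eqs_ext (rel_eqs0 R) => k o i; rewrite mulr0.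
  apply: rel_eqs_ext (rel_eqsZ ((-1) ^+ s * (nleaves l * nleaves r)%:R) (H _ _)).
    by move=> k o i; ring.
  by rewrite /=; lia.
- by move=> t' Ht'; apply: H => /=; rewrite Ht'; lia.
- by move=> t' Ht'; apply: H => /=; rewrite Ht'; lia.
Qed.

Lemma Hsum_loc_tree f s A B C k o i :
  (-1) ^+ loc_sign k A B C * Hsum c f s (loc_tree k o i A B C) =
  (-1) ^+ s * ((if o is Mu then (omega_out k (nleaves A) (nleaves B) (nleaves C))%:R *
                   ((-1) ^+ loc_sign k A B C * c (f (loc_tree k Be i A B C))) else 0) +
               (if i is Mu then (-1) ^+ odd (deg o) *
                   (omega_in k (nleaves A) (nleaves B) (nleaves C))%:R *
                   ((-1) ^+ loc_sign k A B C * c (f (loc_tree k o Be A B C))) else 0))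
  + (-1) ^+ (loc_sign k A B C (+) s (+) locpar o i (+) prepar_A k A B C) *
      Hsum c (fun x => f (loc_tree k o i x B C)) false A
  + (-1) ^+ (loc_sign k A B C (+) s (+) locpar o i (+) prepar_B k A B C) *
      Hsum c (fun y => f (loc_tree k o i A y C)) false B
  + (-1) ^+ (loc_sign k A B C (+) s (+) locpar o i (+) prepar_C k A B C) *
      Hsum c (fun z => f (loc_tree k o i A B z)) false C.
Proof.
case: (ord3P k) => ->; case: o; case: i => /=;
rewrite [Hsum _ _ _ A]Hsum_signE [Hsum _ _ _ B]Hsum_signE [Hsum _ _ _ C]Hsum_signE;
rewrite /nleaves /omega_out /omega_in /loc_sign /locpar /prepar_A /prepar_B /prepar_C;
rewrite /tpar /= ?size_cat ?oddD;
case: (odd (tdeg A)); case: (odd (tdeg B)); case: (odd (tdeg C)); case: s => /=; ring.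
Qed.

Definition loc_fam (g : tree -> R) K A B C : 'I_3 -> dec -> dec -> R :=
  fun k o i => (-1) ^+ loc_sign k A B C * g (plug K (loc_tree k o i A B C)).

Definition local_rel (g : tree -> R) : Prop :=
  forall K A B C, rel_eqs (loc_fam g K A B C).

Definition Hsum_rel_at K : Prop := forall f s, local_rel (fun x => c (f x)) ->
  forall A B C, rel_eqs (loc_fam (Hsum c f s) K A B C).

Lemma Hsum_rel_at_Hole : Hsum_rel_at Hole.
Proof.
move=> f s Q A B C.
apply: rel_eqs_ext; first by move=> k o i; rewrite /loc_fam /= Hsum_loc_tree.
apply: rel_eqsD; first apply: rel_eqsD; first apply: rel_eqsD.
- exact: (rel_eqs_local_homotopy _ _ _ s (Q Hole A B C)).
- apply: rel_eqs_Hsum => t' Ht'.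
  apply: (rel_eqs_ext _ (rel_eqsZ ((-1) ^+ (s (+) false)) (rel_eqs_locpar (Q Hole t' B C)))).
  by move=> k o i; rewrite (signr_regroup _ _ _ (loc_sign_flipA B C k (tpar_succ Ht'))).
- apply: rel_eqs_Hsum => t' Ht'.
  apply: (rel_eqs_ext _ (rel_eqsZ ((-1) ^+ (s (+) tpar A)) (rel_eqs_locpar (Q Hole A t' C)))).
  by move=> k o i; rewrite (signr_regroup _ _ _ (loc_sign_flipB A C k (tpar_succ Ht'))).
- apply: rel_eqs_Hsum => t' Ht'.
  apply: (rel_eqs_ext _
    (rel_eqsZ ((-1) ^+ (s (+) (tpar A (+) tpar B))) (rel_eqs_locpar (Q Hole A B t')))).
  by move=> k o i; rewrite (signr_regroup _ _ _ (loc_sign_flipC A B k (tpar_succ Ht'))).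
Qed.

Lemma Hsum_rel_at_CL d K r : Hsum_rel_at K -> Hsum_rel_at (CL d K r).
Proof.
move=> IH f s Q A B C.
set N := nleaves (plug K (loc_tree i0 Mu Mu A B C)).
set X := odd (ctdeg K) (+) tpar A (+) tpar B (+) tpar C.
apply: (@rel_eqs_ext _ (fun k o i =>
   (if d is Mu then (-1) ^+ s * (N * nleaves r)%:R *
      loc_fam (fun x => c (f x)) (CL Be K r) A B C k o i else 0)
   + loc_fam (Hsum c (fun l' => f (Nd d l' r)) (s (+) odd (deg d))) K A B C k o i
   + (-1) ^+ (s (+) odd (deg d) (+) X) * ((-1) ^+ locpar o i * (-1) ^+ loc_sign k A B C *
       Hsum c (fun r' => f (Nd d (plug K (loc_tree k o i A B C)) r')) false r))).
- move=> k o i; rewrite /loc_fam /= tpar_plug_loc_tree -/X.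
  rewrite (nleaves_plug_loc_tree K k o i) -/N.
  rewrite (Hsum_signE r _ (_ (+) _ (+) _)) !signr_addb.
  by case: d {Q IH}; ring.
- apply: rel_eqsD; first apply: rel_eqsD.
  + case: d Q => Q; last exact: (rel_eqs0 R).
    exact: rel_eqsZ (Q (CL Be K r) A B C).
  + by apply: IH => K' A' B' C'; exact: Q (CL d K' r) A' B' C'.
  + apply: rel_eqsZ; apply: rel_eqs_Hsum => t' _.
    apply: (rel_eqs_ext _ (rel_eqs_locpar (Q (CL d K t') A B C))) => k o i /=.
    by rewrite /loc_fam; ring.
Qed.

Lemma Hsum_rel_at_CR d l K : Hsum_rel_at K -> Hsum_rel_at (CR d l K).
Proof.
move=> IH f s Q A B C.
set N := nleaves (plug K (loc_tree i0 Mu Mu A B C)).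
apply: (@rel_eqs_ext _ (fun k o i =>
   (if d is Mu then (-1) ^+ s * (nleaves l * N)%:R *
      loc_fam (fun x => c (f x)) (CR Be l K) A B C k o i else 0)
   + (-1) ^+ (s (+) odd (deg d)) * ((-1) ^+ loc_sign k A B C *
       Hsum c (fun l' => f (Nd d l' (plug K (loc_tree k o i A B C)))) false l)
   + loc_fam (Hsum c (fun r' => f (Nd d l r')) (s (+) odd (deg d) (+) tpar l)) K A B C k o i)).
- move=> k o i; rewrite /loc_fam /= (nleaves_plug_loc_tree K k o i) -/N.
  rewrite (Hsum_signE l _ (_ (+) _)).
  by case: d {Q IH}; ring.
- apply: rel_eqsD; first apply: rel_eqsD.
  + case: d Q => Q; last exact: (rel_eqs0 R).
    exact: rel_eqsZ (Q (CR Be l K) A B C).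
  + by apply: rel_eqsZ; apply: rel_eqs_Hsum => t' _; exact: Q (CR d t' K) A B C.
  + by apply: IH => K' A' B' C'; exact: Q (CR d l K') A' B' C'.
Qed.

Lemma local_rel_Hsum f s : local_rel (fun x => c (f x)) -> local_rel (Hsum c f s).
Proof.
move=> Q K; move: f s Q; elim: K => [|d K IH r|d l K IH].
- exact: Hsum_rel_at_Hole.
- exact: Hsum_rel_at_CL.
- exact: Hsum_rel_at_CR.
Qed.

Definition Hsum_tiso_at t t' (s : bool) : Prop := forall f f' sg sg' ka,
  (forall u u' s0, tiso u u' s0 -> tdeg u = (tdeg t).+1 ->
     c (f' u') = (-1) ^+ (s0 (+) ka) * c (f u)) ->
  Hsum c f' sg' t' = (-1) ^+ (s (+) ka (+) sg (+) sg') * Hsum c f sg t.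

Lemma Hsum_tiso_node d l r l' r' s1 s2 : tiso l l' s1 -> tiso r r' s2 ->
  Hsum_tiso_at l l' s1 -> Hsum_tiso_at r r' s2 ->
  Hsum_tiso_at (Nd d l r) (Nd d l' r') (s1 (+) s2).
Proof.
move=> Hl Hr IHl IHr f f' sg sg' ka H.
have E1 := IHl (fun x => f (Nd d x r)) (fun x => f' (Nd d x r'))
   (sg (+) odd (deg d)) (sg' (+) odd (deg d)) (s2 (+) ka).
have E2 := IHr (fun x => f (Nd d l x)) (fun x => f' (Nd d l' x))
   (sg (+) odd (deg d) (+) tpar l) (sg' (+) odd (deg d) (+) tpar l') (s1 (+) ka).
rewrite /= E1 ?E2.
- rewrite (tiso_nleaves Hl) (tiso_nleaves Hr) /tpar (tiso_tdeg Hl) -/(tpar l).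
  case: d H {E1 E2} => H.
  + rewrite (H _ _ _ (tiso_node Be Hl Hr)) /=; last lia.
    by rewrite !signr_addb; case: sg; case: sg'; case: (tpar l); rewrite /=; ring.
  + by rewrite !signr_addb; case: sg; case: sg'; case: (tpar l); rewrite /=; ring.
- move=> u u' s0 Hu Hdu.
  rewrite (H _ _ _ (tiso_node d Hl Hu)) /=; last by rewrite Hdu; lia.
  by congr (_ * _); rewrite -addbA addbCA.
- move=> u u' s0 Hu Hdu.
  rewrite (H _ _ _ (tiso_node d Hu Hr)) /=; last by rewrite Hdu; lia.
  by congr (_ * _); rewrite addbA.
Qed.

Lemma Hsum_tiso_swap d l r l' r' s1 s2 : tiso l l' s1 -> tiso r r' s2 ->
  Hsum_tiso_at l l' s1 -> Hsum_tiso_at r r' s2 ->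
  Hsum_tiso_at (Nd d l r) (Nd d r' l') (s1 (+) s2 (+) (tpar l && tpar r)).
Proof.
move=> Hl Hr IHl IHr f f' sg sg' ka H.
have E1 := IHl (fun x => f (Nd d x r)) (fun x => f' (Nd d r' x))
   (sg (+) odd (deg d)) (sg' (+) odd (deg d) (+) tpar r')
   (s2 (+) (~~ tpar l && tpar r) (+) ka).
have E2 := IHr (fun x => f (Nd d l x)) (fun x => f' (Nd d x l'))
   (sg (+) odd (deg d) (+) tpar l) (sg' (+) odd (deg d))
   (s1 (+) (tpar l && ~~ tpar r) (+) ka).
rewrite /= E1 ?E2.
- rewrite (tiso_nleaves Hl) (tiso_nleaves Hr) /tpar (tiso_tdeg Hr) -/(tpar r) -/(tpar l).
  rewrite (mulnC (nleaves r)); case: d H {E1 E2} => H.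
  + rewrite (H _ _ _ (tiso_swap Be Hl Hr)) /=; last lia.
    rewrite !signr_addb.
    by case: sg; case: sg'; case: (tpar l); case: (tpar r); rewrite /=; ring.
  + rewrite !signr_addb.
    by case: sg; case: sg'; case: (tpar l); case: (tpar r); rewrite /=; ring.
- move=> u u' s0 Hu Hdu.
  rewrite (H _ _ _ (tiso_swap d Hl Hu)) /=; last by rewrite Hdu; lia.
  rewrite (tpar_succ Hdu).
  by congr (_ * _); rewrite !addbA (addbC s1).
- move=> u u' s0 Hu Hdu.
  rewrite (H _ _ _ (tiso_swap d Hu Hr)) /=; last by rewrite Hdu; lia.
  rewrite (tpar_succ Hdu).
  by congr (_ * _); rewrite !addbA.
Qed.

Lemma Hsum_tiso t t' s : tiso t t' s -> Hsum_tiso_at t t' s.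
Proof.
elim=> [j|d l r l' r' s1 s2 Hl IHl Hr IHr|d l r l' r' s1 s2 Hl IHl Hr IHr].
- by move=> f f' sg sg' ka _; rewrite /= mulr0.
- exact: Hsum_tiso_node.
- exact: Hsum_tiso_swap.
Qed.

Lemma Hsum_support t f s : Hsum c f s t != 0 ->
  exists t', c (f t') != 0 /\ leaves t' = leaves t.
Proof.
elim: t f s => [j|d l IHl r IHr] f s /=; first by rewrite eqxx.
have [El|/IHl [t' [Ht' <-]]] :=
  eqVneq (Hsum c (fun x => f (Nd d x r)) (s (+) odd (deg d)) l) 0;
  last by exists (Nd d t' r).
have [Er|/IHr [t' [Ht' <-]]] :=
  eqVneq (Hsum c (fun x => f (Nd d l x)) (s (+) odd (deg d) (+) tpar l) r) 0;
  last by exists (Nd d l t').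
rewrite El Er !addr0; case: d {El Er}; last by rewrite eqxx.
by rewrite !mulf_eq0 !negb_or => /andP [_ Hc]; exists (Nd Be l r).
Qed.

Lemma Hop_support n : (forall t, c t != 0 -> perm_eq (leaves t) (iota 0 n)) ->
  forall t, Hop c t != 0 -> perm_eq (leaves t) (iota 0 n).
Proof.
move=> supp t; rewrite /Hop mulf_eq0 negb_or => /andP [_ /Hsum_support [t' [Ht' <-]]].
exact: supp.
Qed.

Lemma Hop_tiso : (forall t t' s, tiso t t' s -> c t' = (-1) ^+ s * c t) ->
  forall t t' s, tiso t t' s -> Hop c t' = (-1) ^+ s * Hop c t.
Proof.
move=> iso t t' s Ht; rewrite /Hop (tiso_nleaves Ht).
rewrite (@Hsum_tiso _ _ _ Ht id id false false false); first by rewrite !addbF mulrCA.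
by move=> u u' s0 Hu _; rewrite addbF; exact: iso Hu.
Qed.

Lemma local_rel_Hop : local_rel c -> local_rel (Hop c).
Proof.
move=> Q K A B C.
set N := nleaves (plug K (loc_tree i0 Mu Mu A B C)).
have := rel_eqsZ (('C(N, 2))%:R^-1 : R) (@local_rel_Hsum id false Q K A B C).
apply: rel_eqs_ext => k o i.
by rewrite /loc_fam /Hop (nleaves_plug_loc_tree K k o i) mulrCA.
Qed.

End Homotopy.

Theorem lemma2p5 (R : fieldType) (charR : [pchar R]%R =i pred0) (n : nat)
  (c : tree -> R) :
  Gdual n c -> Gdual n (Hop c).
Proof.
move=> [[supp iso] rel]; split; first split.
- exact: Hop_support.
- exact: Hop_tiso.
- move=> K A B C; apply/in_relspanP/local_rel_Hop => K' A' B' C'.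
  exact/in_relspanP/rel.
Qed.
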